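(* Let $s \ge 4$ and let $X$ be an antipodal $s$-distance set in the unit sphere $S^{d-1}\subset\mathbb{R}^d$ with $|X| \ge 4\binom{d+s-3}{s-2} + 2$. Then every $\beta \in B(X)$ is a rational number.
   Context: A finite set $X \subset \mathbb{R}^d$ is an $s$-distance set if the set of Euclidean distances between distinct points of $X$ has exactly $s$ elements. $X$ is antipodal if $-x \in X$ for every $x \in X$. For $X \subset S^{d-1}$, $B(X) = \{(x,y) : x, y \in X, x \neq y\}$, where $(\cdot,\cdot)$ is the standard inner product. *)

From HB Require Import structures.
From mathcomp Require Import all_boot all_order all_algebra.
From mathcomp Require Import finmap.
Set Implicit Arguments. Unset Strict Implicit. Unset Printing Implicit Defensive.
Import Order.TTheory GRing.Theory Num.Theory.
Local Open Scope ring_scope.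
Local Open Scope fset_scope.

Definition dotp {R : ringType} {d : nat} (x y : 'rV[R]_d) : R :=
  \sum_(i < d) x 0 i * y 0 i.

Definition edist {R : rcfType} {d : nat} (x y : 'rV[R]_d) : R :=
  Num.sqrt (dotp (x - y) (x - y)).

Definition dist_set {R : rcfType} {d : nat} (X : {fset 'rV[R]_d}) : {fset R} :=
  [fset edist x y | x in X, y in X & x != y].

Definition is_s_distance_set {R : rcfType} {d : nat} (s : nat)
  (X : {fset 'rV[R]_d}) : Prop := #|` dist_set X| = s.

Definition antipodal {R : ringType} {d : nat} (X : {fset 'rV[R]_d}) : Prop :=
  forall x, x \in X -> - x \in X.

Definition on_unit_sphere {R : ringType} {d : nat} (X : {fset 'rV[R]_d}) : Prop :=
  forall x, x \in X -> dotp x x = 1.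

Definition Bset {R : ringType} {d : nat} (X : {fset 'rV[R]_d}) : {fset R} :=
  [fset dotp x y | x in X, y in X & x != y].

From HB Require Import structures.
From mathcomp Require Import all_boot all_order all_algebra.
From mathcomp Require Import finmap reals.
From mathcomp Require Import ring lra zify.
From Stdlib Require Import Classical.
Set Implicit Arguments. Unset Strict Implicit. Unset Printing Implicit Defensive.
Import Order.TTheory GRing.Theory Num.Theory.
Local Open Scope ring_scope.

(* Keep one point y_a of each antipodal pair of X, so that no <y_a, y_c> is -1;
   there are m = |X| / 2 > 2 C(d+s-3, s-2) of them. For beta in B(X) other
   than 0 and -1, let F(t) = t^e Q(t^2) vanish on B(X) minus {beta, -beta, -1},
   but not at 1 or beta; counting B(X) = (negatives) + (0?) + (positives) shows
   deg F <= s - 3. The Gram matrix (F(<y_a, y_c>)) is then F(beta) (A - l I)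
   with A rational and l = - F(1) / F(beta), while its rows are restrictions
   of homogeneous polynomials of degree <= s - 2, so it has rank at most
   C(d+s-3, s-2) < m / 2. Thus l is an eigenvalue of the rational matrix A of
   geometric, hence algebraic, multiplicity more than half the size of A, which
   forces l to be rational. The same argument for t F(t) shows that
   F(1) / (beta F(beta)) is rational, and beta is the quotient of the two. *)

Lemma corank_le_mup_char_poly (F : fieldType) m (B : 'M[F]_m) (a : F) :
  (m - \rank (B - a%:M)%R <= mup a (char_poly B))%N.
Proof.
set C := (B - a%:M)%R; set r := \rank C.
pose U := map_mx (@polyC F) (col_base C).
pose V := map_mx (@polyC F) (row_base C).
pose y : {poly F} := 'X - a%:P.
have charB : char_poly_mx B = y%:M - U *m V.
  rewrite /char_poly_mx /U /V -map_mxM mulmx_base /C.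
  apply/matrixP => i j; rewrite !mxE rmorphB rmorphMn /= /y.
  by case: (i == j); rewrite ?mulr1n ?mulr0n ?subr0 //=; ring.
(* With B - a = U V of inner width r, two Schur complements of [[y, U], [V, 1]]
   give char_poly B = det (y - U V) = y^(m-r) det (y - V U), y = X - a. *)
set K := block_mx (y%:M : 'M_m) U V (1%:M : 'M_r).
have detK : \det K = char_poly B.
  have : block_mx 1%:M (- U) 0 1%:M *m K = block_mx (char_poly_mx B) 0 V 1%:M.
    by rewrite mulmx_block !mul1mx !mul0mx !add0r mulmx1 charB mulNmx addrC subrr.
  by move/(congr1 determinant); rewrite det_mulmx det_ublock det_lblock !det1 !mul1r mulr1.
have : block_mx 1%:M 0 (- V) (y%:M : 'M_r) *m K = block_mx y%:M U 0 (y%:M - V *m U).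
  by rewrite mulmx_block !mul1mx !mul0mx !addr0 mulmx1 mulNmx scalar_mxC addNr mulNmx addrC.
move/(congr1 determinant).
rewrite det_mulmx det_lblock det_ublock det1 mul1r !det_scalar detK => charE.
have yr_neq0 : y ^+ r != 0 by rewrite expf_neq0 // polyXsubC_eq0.
have charF : char_poly B = y ^+ (m - r) * \det (y%:M - V *m U).
  by apply: (mulfI yr_neq0); rewrite charE mulrA -exprD subnKC ?rank_leq_row.
by rewrite mup_geq ?monic_neq0 ?char_poly_monic // charF dvdp_mulIl.
Qed.

Section RationalRoot.
Variables (R : numFieldType) (l : R).
Local Notation ratp := (map_poly (@ratr R)).

Lemma ex_rat_minpoly (h : {poly rat}) : h != 0 -> root (ratp h) l ->
  exists p : {poly rat}, [/\ p != 0, root (ratp p) l &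
    forall q : {poly rat}, root (ratp q) l -> p %| q].
Proof.
move=> h_neq0 h_root.
have [p [p_neq0 p_root p_min]] : exists p : {poly rat}, [/\ p != 0, root (ratp p) l &
    forall q, q != 0 -> root (ratp q) l -> (size p <= size q)%N].
  elim: {h}(size h) {-2}h (leqnn (size h)) h_neq0 h_root => [|n IH] h.
    by rewrite leqn0 size_poly_eq0 => /eqP ->; rewrite eqxx.
  move=> h_size h_neq0 h_root.
  case: (classic (exists q, [/\ q != 0, root (ratp q) l & (size q < size h)%N])).
    move=> [q [q_neq0 q_root q_size]]; apply: (IH q) => //.
    by rewrite -ltnS (leq_trans q_size).
  move=> no_smaller; exists h; split => // q q_neq0 q_root; rewrite leqNgt.
  by apply/negP => q_size; apply: no_smaller; exists q.
exists p; split => // q q_root; apply/modp_eq0P/eqP/negPn/negP => r_neq0.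
have : root (ratp (q %% p)) l.
  move: q_root; rewrite /root {1}(divp_eq q p) rmorphD rmorphM /= hornerD hornerM.
  by rewrite (eqP p_root) mulr0 add0r.
by move/(p_min _ r_neq0); rewrite leqNgt ltn_modp p_neq0.
Qed.

Section MinimalPolynomial.
Variable p : {poly rat}.
Hypotheses (p_neq0 : p != 0) (p_root : root (ratp p) l).
Hypothesis p_min : forall q : {poly rat}, root (ratp q) l -> p %| q.

Lemma size_rat_minpoly_gt1 : (1 < size p)%N.
Proof.
rewrite ltnNge; apply/negP => /size1_polyC p_const.
by move: p_root p_neq0; rewrite p_const map_polyC /root hornerC fmorph_eq0 polyC_eq0 => ->.
Qed.

Lemma mup_rat_minpoly : mup l (ratp p) = 1%N.
Proof.
have p_size := size_rat_minpoly_gt1.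
have dp_neq0 : p^`() != 0.
  apply/eqP => /(congr1 (fun q : {poly rat} => q`_(size p).-2)).
  rewrite coef_deriv coef0 prednK; last by rewrite -ltnS prednK // ltnW.
  move/eqP; rewrite mulrn_eq0 -lead_coefE lead_coef_eq0 (negPf p_neq0) orbF.
  by case: (size p) p_size => // [[]].
(* Minimality forbids the smaller nonzero polynomial p' from vanishing at l. *)
have dp_nroot : ~~ root (ratp p^`()) l.
  by apply/negP => /p_min /(dvdp_leq dp_neq0); rewrite leqNgt lt_size_deriv.
apply/eqP; rewrite eqn_leq mup_leq ?mup_geq ?dvdp_XsubCl ?p_root ?map_poly_eq0 //= andbT.
apply/negP => /dvdpP [g Eg]; move: dp_nroot.
rewrite -deriv_map Eg derivM !exprS expr0 mulr1 derivM derivXsubC.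
by rewrite /root !hornerE subrr /= !mulr0 !add0r subrr mulr0 eqxx.
Qed.

Lemma rat_minpoly_exp_dvdp (h : {poly rat}) j : h != 0 ->
  (j <= mup l (ratp h))%N -> p ^+ j %| h.
Proof.
have mup_exp k : mup l (ratp p ^+ k) = k.
  elim: k => [|k IHk]; first by rewrite expr0 mupNroot // root1.
  by rewrite exprS mupM ?expf_neq0 ?map_poly_eq0 // mup_rat_minpoly IHk.
move=> h_neq0; elim: j => [|j IH] j_le; first by rewrite expr0 dvd1p.
have /dvdpP [g Eg] := IH (ltnW j_le).
have g_neq0 : g != 0 by apply: contra h_neq0; rewrite Eg => /eqP ->; rewrite mul0r.
move: j_le; rewrite Eg rmorphM rmorphXn /= mupM ?expf_neq0 ?map_poly_eq0 //.
rewrite mup_exp -{1}[j]add0n ltn_add2r -XsubC_dvd ?map_poly_eq0 // dvdp_XsubCl.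
by move/p_min => p_dvd_g; rewrite exprS dvdp_mul.
Qed.

End MinimalPolynomial.

(* The minimal polynomial p of l satisfies p^M | h, forcing deg p = 1. *)
Lemma rat_root_of_large_mup (h : {poly rat}) (M : nat) : h != 0 ->
  (M <= mup l (ratp h))%N -> (size h <= 2 * M)%N -> exists q : rat, l = ratr q.
Proof.
move=> h_neq0 M_le h_size.
have M_gt0 : (0 < M)%N.
  by case: M h_size {M_le} => //; rewrite muln0 leqn0 size_poly_eq0 (negPf h_neq0).
have h_root : root (ratp h) l.
  by rewrite -dvdp_XsubCl XsubC_dvd ?map_poly_eq0 // (leq_trans M_gt0).
have [p [p_neq0 p_root p_min]] := ex_rat_minpoly h_neq0 h_root.
have /dvdpP [g Eg] := rat_minpoly_exp_dvdp p_neq0 p_root p_min h_neq0 M_le.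
have p_size1 := size_rat_minpoly_gt1 p_neq0 p_root.
have p_size : size p = 2%N.
  have g_neq0 : g != 0 by apply: contra h_neq0; rewrite Eg => /eqP ->; rewrite mul0r.
  have g_size : (0 < size g)%N by rewrite size_poly_gt0.
  have pM_size : (0 < size (p ^+ M))%N by rewrite size_poly_gt0 expf_neq0.
  have : ((size p).-1 * M < 2 * M)%N.
    move: h_size; rewrite Eg size_mul ?expf_neq0 // -size_exp.
    by move: (size g) (size (p ^+ M)) g_size pM_size => a b; lia.
  by rewrite ltn_mul2r M_gt0 /=; move: p_size1; case: (size p) => // n; lia.
have p1_neq0 : p`_1 != 0 by move: p_neq0; rewrite -lead_coef_eq0 lead_coefE p_size.
exists (- p`_0 / p`_1).
move: p_root; rewrite /root horner_coef size_map_poly p_size !big_ord_recr big_ord0 /=.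
rewrite !coef_map /= expr0 expr1 mulr1 add0r => /eqP root_eq.
rewrite fmorph_div rmorphN /=; apply: (mulfI (_ : ratr p`_1 != 0)).
  by rewrite fmorph_eq0.
by rewrite mulrCA divff ?fmorph_eq0 // mulr1; apply/eqP; rewrite -addr_eq0 addrC root_eq.
Qed.

End RationalRoot.

Lemma rat_eigenvalue_of_rank_lt_half (R : numFieldType) m (A : 'M[rat]_m) (l : R) :
  (2 * \rank (map_mx (@ratr R) A - l%:M)%R < m)%N -> exists q : rat, l = ratr q.
Proof.
move=> rank_lt.
apply: (@rat_root_of_large_mup R l (char_poly A) (m - \rank (map_mx (@ratr R) A - l%:M))).
- by rewrite monic_neq0 // char_poly_monic.
- by rewrite map_char_poly corank_le_mup_char_poly.
- by rewrite size_char_poly; lia.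
Qed.

Section HomogeneousFunction.
Variables (R : comNzRingType) (n : nat).
Implicit Types (f g : 'rV[R]_n -> R) (u : seq 'I_n).

Definition monomial (x : 'rV[R]_n) u : R := \prod_(i <- u) x 0 i.

(* [homog k f]: f is given by a homogeneous polynomial of degree k, written as
   a list of (coefficient, multiset of variables) pairs. *)
Definition homog (k : nat) f := exists s : seq (R * seq 'I_n),
  all (fun c => size c.2 == k) s /\ forall x, f x = \sum_(c <- s) c.1 * monomial x c.2.

Lemma homog_eq k f g : f =1 g -> homog k f -> homog k g.
Proof. by move=> fg [s [s_size fE]]; exists s; split => // x; rewrite -fg. Qed.

Lemma homog0 k : homog k (fun _ => 0).
Proof. by exists [::]; split => // x; rewrite big_nil. Qed.

Lemma homog1 : homog 0 (fun _ => 1).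
Proof.
by exists [:: (1, [::])]; split => // x; rewrite big_seq1 /monomial big_nil mulr1.
Qed.

Lemma homog_coord i : homog 1 (fun x => x 0 i).
Proof.
by exists [:: (1, [:: i])]; split => // x; rewrite big_seq1 /monomial big_seq1 mul1r.
Qed.

Lemma homogD k f g : homog k f -> homog k g -> homog k (fun x => f x + g x).
Proof.
move=> [s [s_size fE]] [t [t_size gE]]; exists (s ++ t).
by rewrite all_cat s_size t_size; split => // x; rewrite big_cat /= fE gE.
Qed.

Lemma homogZ k a f : homog k f -> homog k (fun x => a * f x).
Proof.
move=> [s [s_size fE]]; exists [seq (a * c.1, c.2) | c <- s]; rewrite all_map.
by split => // x; rewrite big_map fE mulr_sumr; apply: eq_bigr => c _; rewrite mulrA.
Qed.

Lemma homogM k l f g : homog k f -> homog l g -> homog (k + l) (fun x => f x * g x).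
Proof.
move=> [s [s_size fE]] [t [t_size gE]].
exists [seq (c.1 * e.1, c.2 ++ e.2) | c <- s, e <- t]; split.
  apply/allP => _ /allpairsP [[c e] /= [cs et ->]] /=.
  by rewrite size_cat (eqP (allP s_size _ cs)) (eqP (allP t_size _ et)).
move=> x; rewrite fE gE big_distrlr big_allpairs_dep /=.
by apply: eq_bigr => c _; apply: eq_bigr => e _; rewrite /monomial big_cat /=; ring.
Qed.

Lemma homogX k f e : homog k f -> homog (k * e) (fun x => f x ^+ e).
Proof.
move=> hf; elim: e => [|e IH]; first by rewrite muln0; apply: homog_eq homog1 => x.
by rewrite mulnS; apply: homog_eq (homogM hf IH) => x; rewrite exprS.
Qed.

Lemma homog_sum k m (F : 'I_m -> 'rV[R]_n -> R) :
  (forall i, homog k (F i)) -> homog k (fun x => \sum_(i < m) F i x).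
Proof.
elim: m F => [|m IH] F hF; first by apply: homog_eq (homog0 k) => x; rewrite big_ord0.
have := homogD (IH (fun i => F (widen_ord (leqnSn m) i)) (fun i => hF _)) (hF ord_max).
by apply: homog_eq => x; rewrite big_ord_recr.
Qed.

Lemma homog_dotpl (y : 'rV[R]_n) : homog 1 (fun x => dotp x y).
Proof.
apply: homog_sum => i; apply: homog_eq (homogZ (y 0 i) (homog_coord i)) => x.
exact: mulrC.
Qed.

Lemma homog_dotpp : homog 2 (fun x => dotp x x).
Proof. by apply: homog_sum => i; apply: (homogM (homog_coord i) (homog_coord i)). Qed.

End HomogeneousFunction.

Section HomogeneousRank.
Variables (F : fieldType) (n : nat).
Local Notation ordle := (fun i j : 'I_n.+1 => (i <= j)%N).
Local Notation sorted_tuples k := [set t : k.-tuple 'I_n.+1 | sorted leq (map val t)].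

Lemma homog_sorted_monomials k (f : 'rV[F]_n.+1 -> F) : homog k f ->
  exists c : k.-tuple 'I_n.+1 -> F,
    forall x, f x = \sum_(t in sorted_tuples k) c t * monomial x t.
Proof.
move=> [s [s_size fE]].
exists (fun t => \sum_(e <- s) e.1 * (sort ordle e.2 == val t)%:R) => x.
rewrite fE; symmetry; under eq_bigr do rewrite mulr_suml.
rewrite exchange_big /=; apply: eq_big_seq => e es.
under eq_bigr do rewrite -mulrA.
rewrite -mulr_sumr; congr (_ * _).
have sort_size : size (sort ordle e.2) == k by rewrite size_sort (eqP (allP s_size _ es)).
have t_sorted : Tuple sort_size \in sorted_tuples k.
  by rewrite inE /= sorted_map; apply/sort_sorted => i j; exact: leq_total.
rewrite (bigD1 _ t_sorted) /= eqxx mul1r big1 ?addr0.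
  by apply: perm_big; rewrite perm_sort.
move=> t /andP [_ t_neq]; case: eqP => [sortE | _]; last by rewrite mul0r.
by case/eqP: t_neq; apply: val_inj.
Qed.

Lemma mxrank_homog k m m' (p : 'I_m -> 'rV[F]_n.+1) (f : 'I_m' -> 'rV[F]_n.+1 -> F) :
  (forall b, homog k (f b)) -> (\rank (\matrix_(a, b) f b (p a)) <= 'C(k + n, k))%N.
Proof.
move=> f_homog; have [c cE] := fin_all_exists (fun b => homog_sorted_monomials (f_homog b)).
pose P := \matrix_(a < m, i < #|sorted_tuples k|) monomial (p a) (enum_val i).
pose C := \matrix_(i < #|sorted_tuples k|, b < m') c b (enum_val i).
have -> : \matrix_(a, b) f b (p a) = P *m C.
  apply/matrixP => a b; rewrite !mxE cE (big_enum_val (fun t => c b t * monomial (p a) t)).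
  by apply: eq_bigr => i _; rewrite !mxE mulrC.
by rewrite -(card_sorted_tuples k n) (leq_trans (mxrankM_maxl _ _)) ?rank_leq_col.
Qed.

End HomogeneousRank.

Lemma mxrank_gram_poly (F : fieldType) n m (y : 'I_m -> 'rV[F]_n.+1) (e K : nat)
    (r : nat -> F) : (forall a, dotp (y a) (y a) = 1) ->
  (\rank (\matrix_(a, b) \sum_(i < K) r i * dotp (y a) (y b) ^+ (e + 2 * i))%R <=
     'C(e + 2 * K.-1 + n, e + 2 * K.-1))%N.
Proof.
move=> y_unit.
(* On the sphere, homogenize each t^(e+2i) to degree e + 2(K-1) with powers of |x|^2. *)
pose f b x := \sum_(i < K) r i * (dotp x (y b) ^+ (e + 2 * i) * dotp x x ^+ (K.-1 - i)).
have -> : \matrix_(a, b) \sum_(i < K) r i * dotp (y a) (y b) ^+ (e + 2 * i) =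
          \matrix_(a, b) f b (y a).
  by apply/matrixP => a b; rewrite !mxE; apply: eq_bigr => i _; rewrite y_unit expr1n mulr1.
apply: mxrank_homog => b; apply: homog_sum => i; apply: homogZ.
have -> : (e + 2 * K.-1 = 1 * (e + 2 * i) + 2 * (K.-1 - i))%N by case: i => i /=; lia.
exact: homogM (homogX _ (homog_dotpl _)) (homogX _ (homog_dotpp _ _)).
Qed.

Section DotProduct.
Variables (R : realFieldType) (n : nat).
Implicit Types x y : 'rV[R]_n.

Lemma dotpC x y : dotp x y = dotp y x.
Proof. by apply: eq_bigr => i _; rewrite mulrC. Qed.

Lemma dotpNr x y : dotp x (- y) = - dotp x y.
Proof. by rewrite /dotp -sumrN; apply: eq_bigr => i _; rewrite mxE mulrN. Qed.

Lemma dotpNl x y : dotp (- x) y = - dotp x y.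
Proof. by rewrite dotpC dotpNr dotpC. Qed.

Lemma dotpBB x y : dotp (x - y) (x - y) = dotp x x + dotp y y - 2 * dotp x y.
Proof.
rewrite /dotp mulr_sumr -big_split -sumrB /=; apply: eq_bigr => i _.
by rewrite !mxE; ring.
Qed.

Lemma dotpp_ge0 x : 0 <= dotp x x.
Proof. by apply: sumr_ge0 => i _; rewrite -expr2 sqr_ge0. Qed.

Lemma dotpp_eq0 x : (dotp x x == 0) = (x == 0).
Proof.
apply/idP/eqP => [|->]; last by rewrite /dotp big1 // => i _; rewrite mxE mul0r.
rewrite psumr_eq0 => [/allP x0|i _]; last by rewrite -expr2 sqr_ge0.
apply/rowP => i; rewrite mxE; apply/eqP.
by have := x0 i (mem_index_enum _); rewrite -expr2 sqrf_eq0.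
Qed.

Section UnitVectors.
Variables x y : 'rV[R]_n.
Hypotheses (x_unit : dotp x x = 1) (y_unit : dotp y y = 1).

Lemma unit_dotp_le1 : dotp x y <= 1.
Proof. by have := dotpp_ge0 (x - y); rewrite dotpBB x_unit y_unit; lra. Qed.

Lemma unit_dotp_eq1 : (dotp x y == 1) = (x == y).
Proof.
apply/eqP/eqP => [xy1|->]; last by [].
by apply/eqP; rewrite -subr_eq0 -dotpp_eq0 dotpBB x_unit y_unit xy1; apply/eqP; ring.
Qed.

Lemma unit_dotp_eqN1 : (dotp x y == -1) = (y == - x).
Proof.
apply/eqP/eqP => [xyN1|->]; last by rewrite dotpNr x_unit.
apply/eqP; rewrite -subr_eq0 -dotpp_eq0 dotpBB !dotpNl !dotpNr !opprK x_unit y_unit.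
by rewrite (dotpC y x) xyN1; apply/eqP; ring.
Qed.

End UnitVectors.
End DotProduct.

Lemma BsetP (R : nzRingType) n (X : {fset 'rV[R]_n}) b :
  reflect (exists x y, [/\ x \in X, y \in X, x != y & b = dotp x y]) (b \in Bset X).
Proof.
apply: (iffP (imfset2P _ _ _ _ _)) => [[x xX [y]]|[x [y [xX yX xy ->]]]].
  by rewrite /= !inE /= => /andP [yX xy] ->; exists x, y.
by exists x => //; exists y; rewrite //= !inE /= yX xy.
Qed.

Section AntipodalHalves.
Variables (R : realFieldType) (n : nat).

(* Sign of the first nonzero coordinate: picks one point in each pair {x, -x}. *)
Definition lead_pos (x : 'rV[R]_n) : bool :=
  if [pick i | x 0 i != 0] is Some i then 0 < x 0 i else false.

Lemma lead_posN x : x != 0 -> lead_pos (- x) = ~~ lead_pos x.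
Proof.
move=> x_neq0; rewrite /lead_pos.
have -> : [pick i | (- x) 0 i != 0] = [pick i | x 0 i != 0].
  by apply: eq_pick => i /=; rewrite mxE oppr_eq0.
case: pickP => [i xi_neq0 | x_eq0]; first by rewrite mxE oppr_gt0 -leNgt lt_neqAle xi_neq0.
by case/eqP: x_neq0; apply/rowP => i; rewrite mxE; apply/eqP/negbFE/x_eq0.
Qed.

Lemma antipodal_halves (X : {fset 'rV[R]_n}) : 0 \notin X -> antipodal X ->
  exists m (y : 'I_m -> 'rV[R]_n), [/\ #|` X| = (2 * m)%N, injective y,
    forall a, y a \in X & forall a b, y a != - y b].
Proof.
move=> X_neq0 X_anti; pose Y := [seq x <- enum_fset X | lead_pos x].
have Y_uniq : uniq Y by rewrite filter_uniq // fset_uniq.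
have YP a : a \in Y -> a \in X /\ lead_pos a by rewrite mem_filter => /andP [].
have posN x : x \in X -> lead_pos (- x) = ~~ lead_pos x.
  by move=> xX; apply: lead_posN; apply: contraNneq X_neq0 => <-.
exists (size Y), (fun a => nth 0 Y a); split.
- rewrite size_filter -(count_predC lead_pos (enum_fset X)) mul2n -addnn; congr (_ + _).
  have oppX : perm_eq (map -%R (enum_fset X)) (enum_fset X).
    apply: uniq_perm; rewrite ?(map_inj_uniq oppr_inj) ?fset_uniq // => x.
    apply/mapP/idP => [[z zX ->]|xX]; first exact: X_anti.
    by exists (- x); rewrite ?opprK ?X_anti.
  rewrite -(permP oppX) count_map; apply: eq_in_count => x xX /=.
  by rewrite posN ?negbK.
- by move=> a b /eqP; rewrite nth_uniq // => /eqP /val_inj.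
- by move=> a; have [] := YP _ (mem_nth 0 (ltn_ord a)).
- move=> a b; have [_ ya_pos] := YP _ (mem_nth 0 (ltn_ord a)).
  have [yb_in yb_pos] := YP _ (mem_nth 0 (ltn_ord b)).
  by apply: contraTneq ya_pos => ->; rewrite posN // yb_pos.
Qed.

End AntipodalHalves.

(* The Gram matrix of G is G(b) (A - l I) for a rational matrix A with entries
   0, 1 and sg, and l = - G(1) / G(b); by its rank, l is a rational eigenvalue. *)
Lemma gram_fun_ratio_rat (R : realFieldType) n m (y : 'I_m -> 'rV[R]_n)
    (G : R -> R) (b : R) (sg : rat) :
  (forall a, dotp (y a) (y a) = 1) -> G b != 0 -> b != - b -> G (- b) = ratr sg * G b ->
  (forall a c, a != c -> dotp (y a) (y c) != b -> dotp (y a) (y c) != - b ->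
     G (dotp (y a) (y c)) = 0) ->
  (2 * \rank (\matrix_(a, c) G (dotp (y a) (y c)))%R < m)%N ->
  exists q : rat, G 1 / G b = ratr q.
Proof.
move=> y_unit Gb_neq0 b_neqN Gb_sym G_vanish rank_lt.
pose A : 'M[rat]_m := \matrix_(a, c) if a == c then 0 else
  if dotp (y a) (y c) == b then 1 else if dotp (y a) (y c) == - b then sg else 0.
pose l := - (G 1 / G b).
have GramE : \matrix_(a, c) G (dotp (y a) (y c)) = G b *: (map_mx ratr A - l%:M).
  apply/matrixP => a c; rewrite !mxE.
  have [<-|ac] := eqVneq a c.
    by rewrite y_unit mulr1n rmorph0 sub0r opprK mulrC divfK.
  rewrite mulr0n subr0.
  have [->|yb] := eqVneq (dotp (y a) (y c)) b; first by rewrite rmorph1 mulr1.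
  have [->|yNb] := eqVneq (dotp (y a) (y c)) (- b); first by rewrite Gb_sym mulrC.
  by rewrite rmorph0 mulr0 G_vanish.
move: rank_lt; rewrite GramE mxrank_scale_nz // => /rat_eigenvalue_of_rank_lt_half [q qE].
by exists (- q); rewrite rmorphN /= -qE opprK.
Qed.

Lemma leq_bin_diag k l n : (k <= l)%N -> ('C(k + n, k) <= 'C(l + n, l))%N.
Proof.
have binC j : 'C(j + n, j) = 'C(j + n, n).
  by rewrite -[X in 'C(_, X) = _](addnK n j) bin_sub // leq_addl.
by move=> kl; rewrite !binC leq_bin2l ?leq_add2r.
Qed.

Lemma count_sign_uniq (R : realDomainType) (s : seq R) : uniq s ->
  size s =
    (count [pred x : R | (x < 0)%R] s + (0%R \in s) + count [pred x : R | (0 < x)%R] s)%N.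
Proof.
move=> s_uniq; rewrite -count_uniq_mem //; elim: s {s_uniq} => //= x s ->.
by case: ltgtP => //= _; rewrite ?addnS ?addSn.
Qed.

Section SphericalInnerProducts.
Variables (R : realFieldType) (n : nat) (X : {fset 'rV[R]_n}).
Hypotheses (X_sphere : on_unit_sphere X) (X_anti : antipodal X).
Local Notation B := (Bset X).

Lemma sphere_neq0 : 0 \notin X.
Proof.
by apply/negP => /X_sphere x0; have := dotpp_eq0 (0 : 'rV[R]_n); rewrite x0 eqxx oner_eq0.
Qed.

Lemma Bset_lt1 b : b \in B -> b < 1.
Proof.
case/BsetP => [x [y [xX yX xy ->]]].
by rewrite lt_neqAle unit_dotp_le1 ?unit_dotp_eq1 ?X_sphere ?xy.
Qed.

Lemma BsetN b : b \in B -> b != -1 -> - b \in B.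
Proof.
case/BsetP => [x [y [xX yX xy ->]]] xy_neqN1; apply/BsetP; exists x, (- y).
rewrite dotpNr X_anti //; split => //.
by apply: contra xy_neqN1 => /eqP ->; rewrite dotpNl X_sphere.
Qed.

Lemma Bset_N1 b : b \in B -> -1 \in B.
Proof.
case/BsetP => [x [_ [xX _ _ _]]]; apply/BsetP; exists x, (- x).
split; rewrite ?dotpNr ?X_sphere ?X_anti //.
by apply/eqP => xN; move: (X_sphere xX); rewrite {2}xN dotpNr X_sphere //; lra.
Qed.

End SphericalInnerProducts.

Lemma card_Bset_le (R : rcfType) n s (X : {fset 'rV[R]_n}) : on_unit_sphere X ->
  is_s_distance_set s X -> (#|` Bset X| <= s)%N.
Proof.
move=> X_sphere <-; pose dist (b : R) := Num.sqrt (2 - 2 * b).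
have dist_inj : {in Bset X &, injective dist}.
  move=> a b aB bB /eqP; have := Bset_lt1 X_sphere aB; have := Bset_lt1 X_sphere bB.
  by move=> b_lt1 a_lt1; rewrite eqr_sqrt => [/eqP||]; lra.
rewrite -(size_map dist) uniq_leq_size ?map_inj_in_uniq ?fset_uniq //.
move=> _ /mapP [b bB ->]; have [x [y [xX yX xy ->]]] := BsetP _ _ bB.
apply/imfset2P; exists x => //; exists y; first by rewrite /= !inE /= yX xy.
by rewrite /edist dotpBB !X_sphere //; congr Num.sqrt; ring.
Qed.

Section Annihilator.
Variables (R : realFieldType) (n : nat) (X : {fset 'rV[R]_n.+1}).
Hypotheses (X_sphere : on_unit_sphere X) (X_anti : antipodal X).
Variable b : R.
Hypotheses (bB : b \in Bset X) (b_neq0 : b != 0) (b_neqN1 : b != -1).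
Local Notation B := (Bset X).

Definition zero_in_Bset : bool := 0 \in B.
Local Notation z := (nat_of_bool zero_in_Bset).

Definition annihilator_roots : {fset R} := [fset g in B | (0 < g) && (g != `|b|)]%fset.

Definition annihilator_poly : {poly R} :=
  \prod_(a <- [seq g ^+ 2 | g <- enum_fset annihilator_roots]) ('X - a%:P).

(* Vanishes on B except at b, -b and -1, with degree z + 2 #|annihilator_roots|. *)
Definition annihilator (t : R) : R := t ^+ z * annihilator_poly.[t ^+ 2].

Lemma root_annihilator_poly t :
  root annihilator_poly t = (t \in [seq g ^+ 2 | g <- enum_fset annihilator_roots]).
Proof. by rewrite /annihilator_poly root_prod_XsubC. Qed.

Lemma annihilator_rootsP g :
  reflect [/\ g \in B, 0 < g & g != `|b|] (g \in annihilator_roots).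
Proof. by rewrite !inE /=; apply: (iffP and3P). Qed.

Lemma annihilator_vanish g : g \in B -> g != -1 -> g != b -> g != - b -> annihilator g = 0.
Proof.
move=> gB g_neqN1 g_neqb g_neqNb; rewrite /annihilator.
have [g0|g_neq0] := eqVneq g 0.
  by move: gB; rewrite g0 /zero_in_Bset => ->; rewrite expr1 mul0r.
suff /eqP -> : root annihilator_poly (g ^+ 2) by rewrite mulr0.
rewrite root_annihilator_poly -real_normK ?num_real //; apply: map_f.
apply/annihilator_rootsP; split; rewrite ?normr_gt0 ?eqr_norm2 ?negb_or ?g_neqb ?g_neqNb //.
by case: ger0P => // _; apply: BsetN.
Qed.

Lemma annihilator_neq0 : annihilator b != 0.
Proof.
rewrite mulf_neq0 ?expf_neq0 //; change (~~ root annihilator_poly (b ^+ 2)).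
rewrite root_annihilator_poly.
apply/negP => /mapP [g /annihilator_rootsP [_ g_gt0 g_neq] /eqP].
rewrite eq_sym eqf_sqr => gb; move: g_neq; rewrite -(gtr0_norm g_gt0).
by case/orP: gb => /eqP ->; rewrite ?normrN eqxx.
Qed.

Lemma annihilator1_neq0 : annihilator 1 != 0.
Proof.
rewrite /annihilator !expr1n mul1r; change (~~ root annihilator_poly 1).
rewrite root_annihilator_poly.
apply/negP => /mapP [g /annihilator_rootsP [gB g_gt0 _] g_sq].
by move: g_sq; have := Bset_lt1 X_sphere gB; nra.
Qed.

Lemma annihilatorN : annihilator (- b) = (-1) ^+ z * annihilator b.
Proof. by rewrite /annihilator sqrrN -[- b]mulN1r exprMn mulrA. Qed.

Lemma annihilator_powE k t :
  t ^+ k * annihilator t =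
    \sum_(i < size annihilator_poly) annihilator_poly`_i * t ^+ (k + z + 2 * i).
Proof.
rewrite /annihilator horner_coef !mulr_sumr; apply: eq_bigr => i _.
by rewrite -exprM mulrA -exprD mulrCA -exprD.
Qed.

Local Notation positive := [pred x : R | 0 < x].
Local Notation negative := [pred x : R | x < 0].

Lemma card_Bset_annihilator : (z + 2 * #|` annihilator_roots| + 3 <= #|` B|)%N.
Proof.
have absb_in : `|b| \in B by case: ger0P => // _; apply: BsetN.
have pos_ge : (#|` annihilator_roots| + 1 <= count positive (enum_fset B))%N.
  rewrite addn1 -size_filter -(size_rcons _ `|b|) uniq_leq_size //.
    rewrite rcons_uniq fset_uniq andbT; apply/negP => /annihilator_rootsP [_ _].
    by rewrite eqxx.
  move=> x; rewrite mem_rcons inE mem_filter.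
  case/orP => [/eqP ->|/annihilator_rootsP [xB x_gt0 _]].
    by rewrite /= absb_in normr_gt0 b_neq0.
  by rewrite /= x_gt0 xB.
have neg_ge : (count positive (enum_fset B) + 1 <=
               count negative (enum_fset B))%N.
  rewrite addn1 -!size_filter -(size_map -%R) -(size_rcons _ (-1)) uniq_leq_size //.
    rewrite rcons_uniq (map_inj_uniq oppr_inj) filter_uniq ?fset_uniq // andbT.
    apply/mapP => [[x]]; rewrite mem_filter => /andP [_ xB] /eqP.
    by rewrite eqr_opp => /eqP x1; have := Bset_lt1 X_sphere xB; rewrite -x1 ltxx.
  move=> x; rewrite mem_rcons inE mem_filter => /orP [/eqP ->|].
    by rewrite /= ltrN10 (Bset_N1 X_sphere X_anti bB).
  case/mapP => y; rewrite mem_filter => /andP [/= y_gt0 yB] ->.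
  by rewrite /= oppr_lt0 y_gt0 BsetN // gt_eqF // (lt_trans _ y_gt0) ?ltrN10.
have -> : #|` B| = (count negative (enum_fset B) + z + count positive (enum_fset B))%N.
  exact: count_sign_uniq (fset_uniq B).
lia.
Qed.

Lemma annihilator_ratio_rat k s m (y : 'I_m -> 'rV[R]_n.+1) : (k <= 1)%N ->
  (#|` B| <= s)%N -> (forall a, y a \in X) -> injective y -> (forall a c, y a != - y c) ->
  (2 * 'C(s - 2 + n, s - 2) < m)%N ->
  exists q : rat, annihilator 1 / (b ^+ k * annihilator b) = ratr q.
Proof.
move=> k_le1 B_le yX y_inj y_antip rank_lt.
have y_unit a : dotp (y a) (y a) = 1 by apply: X_sphere.
have [q qE] : exists q : rat, 1 ^+ k * annihilator 1 / (b ^+ k * annihilator b) = ratr q.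
  apply: (@gram_fun_ratio_rat _ _ _ y (fun t => t ^+ k * annihilator t) b
    ((-1) ^+ (k + z))) => //.
  - by rewrite mulf_neq0 ?expf_neq0 ?annihilator_neq0.
  - by rewrite eq_sym eqNr.
  - by rewrite annihilatorN rmorphXn rmorphN1 exprD [(- b) ^+ k]exprNn mulrACA mulrA.
  - move=> a c ac yb yNb; rewrite annihilator_vanish ?mulr0 //.
      by apply/BsetP; exists (y a), (y c); rewrite (inj_eq y_inj).
    by rewrite unit_dotp_eqN1 ?y_unit ?y_antip.
  - apply: leq_ltn_trans rank_lt; rewrite leq_mul2l /=.
    under eq_mx do rewrite annihilator_powE.
    apply: leq_trans (mxrank_gram_poly _ _ _ y_unit) _; apply: leq_bin_diag.
    move: card_Bset_annihilator B_le; rewrite size_prod_XsubC size_map /=.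
    by move: (nat_of_bool _) #|` annihilator_roots| #|` B| => ? ? ?; lia.
by exists q; rewrite -qE expr1n mul1r.
Qed.

End Annihilator.

Theorem theorem5p4 (R : realType) (d s : nat) (X : {fset 'rV[R]_d}) :
  (4 <= s)%N ->
  on_unit_sphere X ->
  antipodal X ->
  is_s_distance_set s X ->
  (4 * 'C(d + s - 3, s - 2) + 2 <= #|` X|)%N ->
  forall beta, beta \in Bset X -> exists q : rat, beta = ratr q.
Proof.
move=> s_ge4 X_sphere X_anti X_sdist X_card beta betaB.
have [->|beta_neqN1] := eqVneq beta (-1); first by exists (-1); rewrite rmorphN1.
have [->|beta_neq0] := eqVneq beta 0; first by exists 0; rewrite rmorph0.
case: d X X_sphere X_anti X_sdist X_card betaB => [|n] X X_sphere X_anti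
  X_sdist X_card betaB.
  case/BsetP: betaB => x [_ [xX _ _ _]]; move: (X_sphere _ xX).
  by rewrite /dotp big_ord0 => /eqP; rewrite eq_sym oner_eq0.
have [m [y [Xm y_inj yX y_antip]]] := antipodal_halves (sphere_neq0 X_sphere) X_anti.
have rank_lt : (2 * 'C(s - 2 + n, s - 2) < m)%N.
  by move: X_card; rewrite Xm (_ : (n.+1 + s - 3 = s - 2 + n)%N); lia.
have B_le := card_Bset_le X_sphere X_sdist.
have [q0 q0E] := annihilator_ratio_rat X_sphere X_anti betaB beta_neq0 beta_neqN1
  (leq0n 1) B_le yX y_inj y_antip rank_lt.
have [q1 q1E] := annihilator_ratio_rat X_sphere X_anti betaB beta_neq0 beta_neqN1
  (leqnn 1) B_le yX y_inj y_antip rank_lt.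
exists (q0 / q1); rewrite fmorph_div /= -q0E -q1E expr0 expr1 mul1r.
have ann1_neq0 : annihilator X beta 1 != 0 by apply: annihilator1_neq0.
have annb_neq0 : annihilator X beta beta != 0 by apply: annihilator_neq0.
by field; rewrite ann1_neq0 annb_neq0 beta_neq0.
Qed.
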